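(* Let $n,k\ge 1$, let $W(k)\subseteq[n]^k$ be a (multi)set of $k$-tuples, let $\mathcal C\subseteq\mathbb F_2^n$ be a linear $\eta_0$-balanced code, and suppose $\mathcal C'=\mathrm{dsum}_{W(k)}(\mathcal C)$ is $\eta$-balanced, where $\eta\in(0,1)$. Let $\tilde y\in\mathbb F_2^{W(k)}$ and define $$\mathcal L=\mathcal L(\tilde y,\mathcal C,\mathcal C')=\Big\{(z,\mathrm{dsum}_{W(k)}(z)) : z\in\mathcal C,\ \Delta(\mathrm{dsum}_{W(k)}(z),\tilde y)\le \tfrac12-\sqrt\eta\Big\}.$$ Let $\zeta<1/2$ and suppose $\mathcal L'$ is a $\zeta$-cover of $\mathcal L$ such that $\Delta(y',\tilde y)\le \frac12-\sqrt\eta$ for every $(z',y')\in\mathcal L'$. If $W(k)$ is a $(1-2\zeta,\eta)$-parity sampler, then there exists $\mathcal L''\subseteq\mathcal L'$ with $|\mathcal L''|\le 1/\eta$ which is a $(2\zeta)$-cover of $\mathcal L$.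
   Context: For $z,z'\in\mathbb F_2^m$, $\Delta(z,z')=|\{i: z_i\neq z'_i\}|/m$ is the relative Hamming distance, and $\mathrm{bias}(z)=|\mathbb E_{i\in[m]}(-1)^{z_i}|$. A code $\mathcal C$ is $\varepsilon$-balanced if $\mathrm{bias}(z+z')\le\varepsilon$ for all distinct $z,z'\in\mathcal C$. For $W(k)\subseteq[n]^k$ and $z\in\mathbb F_2^n$, the direct sum lifting $\mathrm{dsum}_{W(k)}(z)\in\mathbb F_2^{W(k)}$ has coordinates $y_{\mathfrak s}=\sum_{i\in\mathfrak s} z_i$ for $\mathfrak s\in W(k)$ (sum over the entries of the tuple), and $\mathrm{dsum}_{W(k)}(\mathcal C)=\{\mathrm{dsum}_{W(k)}(z):z\in\mathcal C\}$. $W(k)$ is an $(\varepsilon_0,\varepsilon)$-parity sampler if every $z\in\mathbb F_2^n$ with $\mathrm{bias}(z)\le\varepsilon_0$ satisfies $\mathrm{bias}(\mathrm{dsum}_{W(k)}(z))\le\varepsilon$. Given a set $\mathcal L=\{(z,\mathrm{dsum}_{W(k)}(z)): z\in A\}$ with $A\subseteq\mathcal C$, a set $\mathcal L'=\{(z^{(j)},\mathrm{dsum}_{W(k)}(z^{(j)}))\}_{j=1}^m$ with $z^{(j)}\in\mathbb F_2^n$ is a $\zeta$-cover of $\mathcal L$ if for every $(z,y)\in\mathcal L$ there is $(z',y')\in\mathcal L'$ with $\mathrm{bias}(z-z')>1-2\zeta$ (i.e. $\Delta(z,z')<\zeta$ or $\Delta(z,z')>1-\zeta$). *)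

From HB Require Import structures.
From mathcomp Require Import all_boot all_order all_algebra.
From mathcomp Require Import reals.
Set Implicit Arguments. Unset Strict Implicit. Unset Printing Implicit Defensive.
Import Order.TTheory GRing.Theory Num.Theory.
Local Open Scope ring_scope.

Definition rdist (R : realType) (n : nat) (z z' : 'rV['F_2]_n) : R :=
  (#|[set i : 'I_n | z 0 i != z' 0 i]|%:R) / n%:R.

Definition bias (R : realType) (n : nat) (z : 'rV['F_2]_n) : R :=
  `| (\sum_(i < n) (-1) ^+ (nat_of_ord (z 0 i))) / n%:R |.

(* linear code over F_2: an F_2-subspace (scalars are 0,1, so closure under
   0 and + is exactly being a subspace) *)
Definition linear_code (n : nat) (C : {set 'rV['F_2]_n}) : Prop :=
  0 \in C /\ (forall x y, x \in C -> y \in C -> x + y \in C).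

Definition balanced (R : realType) (n : nat) (eps : R) (C : {set 'rV['F_2]_n}) : Prop :=
  forall z z', z \in C -> z' \in C -> z != z' -> @bias R n (z + z') <= eps.

(* W(k) is a multiset of m k-tuples, given as an indexing W : 'I_m -> [n]^k *)
Definition dsum (n k m : nat) (W : 'I_m -> k.-tuple 'I_n) (z : 'rV['F_2]_n)
  : 'rV['F_2]_m :=
  \row_(s < m) \sum_(j < k) z 0 (tnth (W s) j).

Definition dsum_code (n k m : nat) (W : 'I_m -> k.-tuple 'I_n)
  (C : {set 'rV['F_2]_n}) : {set 'rV['F_2]_m} :=
  [set dsum W z | z in C].

Definition parity_sampler (R : realType) (n k m : nat)
  (W : 'I_m -> k.-tuple 'I_n) (eps0 eps : R) : Prop :=
  forall z : 'rV['F_2]_n, @bias R n z <= eps0 -> @bias R m (dsum W z) <= eps.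

(* The list L(ytil, C, C'), represented by its first components z
   (the second component is determined: y = dsum z). *)
Definition Llist (R : realType) (n k m : nat) (W : 'I_m -> k.-tuple 'I_n)
  (C : {set 'rV['F_2]_n}) (ytil : 'rV['F_2]_m) (eta : R) : {set 'rV['F_2]_n} :=
  [set z in C | @rdist R m (dsum W z) ytil <= 2^-1 - Num.sqrt eta].

Definition is_cover (R : realType) (n : nat) (zeta : R)
  (L L' : {set 'rV['F_2]_n}) : Prop :=
  forall z, z \in L -> exists2 z', z' \in L' & @bias R n (z - z') > 1 - 2 * zeta.

(* The list L'' is a
   maximal subset of L' whose elements are pairwise "far" (bias of the
   difference at most 1 - 2 zeta).
   - Covering: by maximality every z' in L' is close (bias of the difference
     above 1 - 2 zeta) to some w in L''; a triangle inequality for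
     correlations then turns the zeta-cover L' of L into a (2 zeta)-cover L''.
   - Size: differences of elements of L'' have bias at most 1 - 2 zeta, so by
     the parity sampler property their direct sums are eta-balanced, while
     all these direct sums lie within relative distance 1/2 - sqrt eta of
     ytil.  A Johnson-type bound (Cauchy-Schwarz on the column sums of the
     sign matrix of the words dsum z - ytil) gives |L''| * eta <= 1.
   The file first develops the characters and correlations, then the
   triangle inequality, Cauchy-Schwarz and the Johnson bound, the
   translation to biases and distances, the maximal packing lemma, and
   finally the theorem. *)
From HB Require Import structures.
From mathcomp Require Import all_boot all_order all_algebra.
From mathcomp Require Import reals.
From mathcomp Require Import lra ring.
Set Implicit Arguments. Unset Strict Implicit. Unset Printing Implicit Defensive.
Import Order.TTheory GRing.Theory Num.Theory.
Local Open Scope ring_scope.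

Lemma F2_cases (a : 'F_2) : a = 0 \/ a = 1.
Proof. by case: a => [[|[|a]] Ha]; [left|right|]; try apply: val_inj. Qed.

Section Correlation.
Variable R : realDomainType.

Definition chi (a : 'F_2) : R := (-1) ^+ (nat_of_ord a).

Lemma chiD a b : chi (a + b) = chi a * chi b.
Proof.
have two0 : (1 + 1 : 'F_2) = 0 by apply: val_inj.
case: (F2_cases a) => ->; case: (F2_cases b) => ->;
  by rewrite ?addr0 ?add0r ?two0 /chi /= ?expr1 ?mul1r ?mulr1 ?mulrNN ?mulr1.
Qed.

Lemma chiN a : chi (- a) = chi a.
Proof. by case: (F2_cases a) => ->; rewrite ?oppr0. Qed.

Lemma normr_chi a : `|chi a| = 1.
Proof. by case: (F2_cases a) => ->; rewrite /chi /= ?expr1 ?normrN normr1. Qed.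

Lemma chi_sqr a : chi a * chi a = 1.
Proof. by case: (F2_cases a) => ->; rewrite /chi /= ?expr1 ?mulr1 ?mulrNN ?mulr1. Qed.

Lemma chiB_neq a b : chi (a - b) = 1 - 2 * (a != b)%:R.
Proof.
case: (F2_cases a) => ->; case: (F2_cases b) => ->;
  rewrite ?subrr ?sub0r ?subr0 ?chiN /chi /= ?expr1; lra.
Qed.

Definition corr n (z : 'rV['F_2]_n) : R := \sum_(i < n) chi (z 0 i).

Lemma corr_le n (z : 'rV['F_2]_n) : `|corr z| <= n%:R.
Proof.
apply: le_trans (ler_norm_sum _ _ _) _.
by under eq_bigr do rewrite normr_chi; rewrite sumr_const card_ord.
Qed.

Lemma corr0 n : corr (0 : 'rV['F_2]_n) = n%:R.
Proof.
by rewrite /corr; under eq_bigr do rewrite mxE; rewrite sumr_const card_ord.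
Qed.

Lemma corrN n (z : 'rV['F_2]_n) : corr (- z) = corr z.
Proof. by apply: eq_bigr => i _; rewrite mxE chiN. Qed.

Lemma corr_hamming n (y y' : 'rV['F_2]_n) :
  corr (y - y') = n%:R - 2 * #|[set i : 'I_n | y 0 i != y' 0 i]|%:R.
Proof.
rewrite /corr; under eq_bigr do rewrite !mxE chiB_neq.
rewrite sumrB -mulr_sumr sumr_const card_ord -sum1dep_card natr_sum.
by rewrite [in RHS]big_mkcond; congr (_ - 2 * _); apply: eq_bigr => i _; case: ifP.
Qed.

(* For families bounded by 1, |sum a| + |sum b| - n <= |sum a b|: with the
   signs s, t of the two sums, (1 - s a_i)(1 - t b_i) >= 0 termwise. *)
Lemma sum_prod_lower n (a b : 'I_n -> R) :
  (forall i, `|a i| <= 1) -> (forall i, `|b i| <= 1) ->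
  `|\sum_i a i| + `|\sum_i b i| - n%:R <= `|\sum_i a i * b i|.
Proof.
move=> a1 b1; set s := Num.sg (\sum_i a i); set t := Num.sg (\sum_i b i).
have sgr_le1 (x : R) : `|Num.sg x| <= 1 by rewrite normr_sg; case: (x != 0).
have unit_le (u v : R) : `|u| <= 1 -> `|v| <= 1 -> u * v <= 1.
  move=> u1 v1; apply: le_trans (ler_norm _) _; rewrite normrM.
  by rewrite -[1]mulr1 ler_pM ?normr_ge0.
have term i : s * a i + t * b i - 1 <= s * t * (a i * b i).
  have sa : s * a i <= 1 by apply: unit_le; rewrite ?sgr_le1.
  have tb : t * b i <= 1 by apply: unit_le; rewrite ?sgr_le1.
  have : 0 <= (1 - s * a i) * (1 - t * b i) by apply: mulr_ge0; rewrite subr_ge0.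
  have -> : s * t * (a i * b i) = (s * a i) * (t * b i) by ring.
  nra.
have signed : s * t * \sum_i a i * b i <= `|\sum_i a i * b i|.
  apply: le_trans (ler_norm _) _; rewrite normrM -[X in _ <= X]mul1r.
  by rewrite ler_wpM2r // normrM mulr_ile1 ?normr_ge0 ?sgr_le1.
apply: le_trans signed; rewrite !normrEsg -/s -/t !mulr_sumr.
have -> : n%:R = \sum_(i < n) (1 : R) by rewrite sumr_const card_ord.
by rewrite -!big_split -sumrB; apply: ler_sum => i _; exact: term.
Qed.

Lemma corr_triangle n (x y w : 'rV['F_2]_n) :
  `|corr (x - y)| + `|corr (y - w)| - n%:R <= `|corr (x - w)|.
Proof.
have -> : corr (x - w) = \sum_i chi ((x - y) 0 i) * chi ((y - w) 0 i).
  by apply: eq_bigr => i _; rewrite -chiD !mxE addrA subrK.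
by apply: sum_prod_lower => i; rewrite normr_chi.
Qed.

Lemma sqr_sum_le n (S : 'I_n -> R) : (\sum_i S i) ^+ 2 <= n%:R * \sum_i S i ^+ 2.
Proof.
case: n S => [|n] S; first by rewrite !big_ord0 expr0n /= mul0r.
set T := \sum_i S i; set Q := \sum_i S i ^+ 2; set N : R := n.+1%:R.
have N0 : 0 < N by rewrite ltr0n.
have spread : \sum_i (N * S i - T) ^+ 2 = N * (N * Q - T ^+ 2).
  rewrite (eq_bigr (fun i => N ^+ 2 * S i ^+ 2 - (2 * N * T) * S i + T ^+ 2));
    last by move=> i _; ring.
  rewrite big_split sumrB /= -!mulr_sumr sumr_const card_ord -/T -/Q.
  by rewrite -mulr_natl -/N; ring.
have : 0 <= N * (N * Q - T ^+ 2).
  by rewrite -spread; apply: sumr_ge0 => i _; exact: sqr_ge0.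
by rewrite pmulr_rge0 // subr_ge0.
Qed.

(* Squared column sums of the sign matrix (chi (Y z - yt)_i) are the sum of
   all pairwise correlations: the common shift yt cancels. *)
Lemma sum_sqr_columns (T : finType) m (A : {set T}) (Y : T -> 'rV['F_2]_m)
    (yt : 'rV['F_2]_m) :
  \sum_(i < m) (\sum_(z in A) chi ((Y z - yt) 0 i)) ^+ 2
  = \sum_(z in A) \sum_(z' in A) corr (Y z - Y z').
Proof.
under eq_bigr do rewrite expr2 mulr_suml; under eq_bigr do under eq_bigr do rewrite mulr_sumr.
rewrite exchange_big; apply: eq_bigr => z _; rewrite exchange_big.
apply: eq_bigr => z' _; apply: eq_bigr => i _.
rewrite !mxE !chiD !chiN.
have bb := chi_sqr (yt 0 i).
set a := chi _; set b := chi (yt 0 i) in bb *; set c := chi _.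
by transitivity (a * c * (b * b)); [ring | rewrite bb mulr1].
Qed.

Lemma johnson_bound (T : finType) m (A : {set T}) (Y : T -> 'rV['F_2]_m)
    (yt : 'rV['F_2]_m) (d : R) :
  (0 < m)%N -> 0 <= d ->
  (forall z, z \in A -> 2 * m%:R * d <= corr (Y z - yt)) ->
  (forall z z', z \in A -> z' \in A -> z != z' -> corr (Y z - Y z') <= m%:R * d ^+ 2) ->
  #|A|%:R * d ^+ 2 <= 1.
Proof.
move=> m0 d0 near far; set N : R := #|A|%:R; set M : R := m%:R.
have M0 : 0 < M by rewrite ltr0n.
pose col i := \sum_(z in A) chi ((Y z - yt) 0 i).
have lower : N * (2 * M * d) <= \sum_i col i.
  rewrite /col exchange_big /=; apply: le_trans (ler_sum _ near).
  by rewrite sumr_const -[_ *+ #|A|]mulr_natl.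
have pair z : z \in A -> \sum_(z' in A) corr (Y z - Y z') <= N * M * d ^+ 2 + M.
  move=> zA; rewrite (bigD1 z) //= subrr corr0 addrC lerD2r.
  have : \sum_(z' in A | z' != z) corr (Y z - Y z')
         <= \sum_(z' in A | z' != z) M * d ^+ 2.
    by apply: ler_sum => z' /andP [z'A ne]; apply: far; rewrite // eq_sym.
  move/le_trans; apply; rewrite sumr_const -mulr_natl mulrA ler_wpM2r ?sqr_ge0 //.
  rewrite ler_pM2r // ler_nat; apply: subset_leq_card.
  by apply/subsetP => x /andP [].
have upper : \sum_i col i ^+ 2 <= N * (N * M * d ^+ 2 + M).
  rewrite sum_sqr_columns; apply: le_trans (ler_sum _ pair) _.
  by rewrite sumr_const -[_ *+ #|A|]mulr_natl.
have cs := sqr_sum_le col.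
have lower0 : 0 <= N * (2 * M * d).
  by do 3 (apply: mulr_ge0 => //); exact: ltW.
have sq : (N * (2 * M * d)) ^+ 2 <= (\sum_i col i) ^+ 2.
  by rewrite ler_sqr ?nnegrE // (le_trans lower0 lower).
(* Chaining the bounds gives 4 N^2 d^2 <= N (N d^2 + 1), i.e. 3 N d^2 <= 1. *)
have : M ^+ 2 * (4 * N ^+ 2 * d ^+ 2) <= M ^+ 2 * (N * (N * d ^+ 2 + 1)).
  have E1 : (N * (2 * M * d)) ^+ 2 = M ^+ 2 * (4 * N ^+ 2 * d ^+ 2) by ring.
  have E2 : M * (N * (N * M * d ^+ 2 + M)) = M ^+ 2 * (N * (N * d ^+ 2 + 1)) by ring.
  rewrite -E1 -E2; apply: le_trans sq (le_trans cs _).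
  by rewrite ler_pM2l.
rewrite ler_pM2l ?exprn_gt0 // => key.
have N0 : 0 <= N := ler0n _ _.
nra.
Qed.

End Correlation.

Section Bias.
Variable R : realType.

Lemma biasE n (z : 'rV['F_2]_n) : (0 < n)%N -> @bias R n z = `|corr R z| / n%:R.
Proof. by move=> n0; rewrite /bias normrM normfV (ger0_norm (ler0n _ _)). Qed.

Lemma bias_le1 n (z : 'rV['F_2]_n) : (0 < n)%N -> @bias R n z <= 1.
Proof. by move=> n0; rewrite biasE // ler_pdivrMr ?ltr0n // mul1r corr_le. Qed.

Lemma bias0 n : (0 < n)%N -> @bias R n 0 = 1.
Proof. by move=> n0; rewrite biasE // corr0 ger0_norm // divff ?pnatr_eq0 -?lt0n. Qed.

Lemma bias_subC n (x y : 'rV['F_2]_n) : @bias R n (x - y) = @bias R n (y - x).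
Proof. by rewrite /bias -opprB; congr (`| _ / _ |); apply: (corrN R (y - x)). Qed.

Lemma bias_triangle n (x y w : 'rV['F_2]_n) (a : R) : (0 < n)%N ->
  a < @bias R n (x - y) -> a < @bias R n (y - w) -> 2 * a - 1 < @bias R n (x - w).
Proof.
move=> n0; rewrite !biasE // !ltr_pdivlMr ?ltr0n // => h1 h2.
have := corr_triangle R x y w; lra.
Qed.

Lemma corr_ge_of_rdist m (y yt : 'rV['F_2]_m) (d : R) : (0 < m)%N ->
  @rdist R m y yt <= 2^-1 - d -> 2 * m%:R * d <= corr R (y - yt).
Proof. by move=> m0; rewrite /rdist corr_hamming ler_pdivrMr ?ltr0n //; lra. Qed.

Lemma corr_le_of_bias m (y : 'rV['F_2]_m) (eps : R) : (0 < m)%N ->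
  @bias R m y <= eps -> corr R y <= m%:R * eps.
Proof.
move=> m0; rewrite biasE // ler_pdivrMr ?ltr0n // mulrC => h.
exact: le_trans (ler_norm _) h.
Qed.

End Bias.

Lemma dsumB n k m (W : 'I_m -> k.-tuple 'I_n) (z z' : 'rV['F_2]_n) :
  dsum W (z - z') = dsum W z - dsum W z'.
Proof. by apply/rowP => s; rewrite !mxE -sumrB; apply: eq_bigr => j _; rewrite !mxE. Qed.

Lemma maximal_packing (T : finType) (close : rel T) (S : {set T}) :
  reflexive close -> symmetric close ->
  exists P : {set T}, [/\ P \subset S,
    {in P &, forall x y, x != y -> ~~ close x y} &
    {in S, forall x, exists2 y, y \in P & close x y}].
Proof.
move=> refl sym.
pose packing (B : {set T}) :=
  (B \subset S) && [forall x in B, forall y in B, (x != y) ==> ~~ close x y].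
have packing0 : packing set0 by rewrite /packing sub0set; apply/forall_inP => x; rewrite inE.
have [P maxP _] := maxset_exists packing0.
have /andP [subS /forall_inP sep] := maxsetp maxP.
have apart : {in P &, forall x y, x != y -> ~~ close x y}.
  by move=> x y xP yP; move: (sep x xP) => /forall_inP /(_ y yP) /implyP.
exists P; split=> // x xS.
have [/exists_inP [y yP close_xy] | none] := boolP [exists y in P, close x y].
  by exists y.
have far y : y \in P -> ~~ close x y.
  by move=> yP; apply: contra none => close_xy; apply/exists_inP; exists y.
have packU : packing (x |: P).
  rewrite /packing subUset sub1set xS subS; apply/forall_inP => u uU.
  apply/forall_inP => v vU; apply/implyP.
  move: uU vU; rewrite !in_setU1 => /predU1P [-> | uP] /predU1P [-> | vP] //.
  - by rewrite eqxx.
  - by move=> _; exact: far.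
  - by move=> _; rewrite sym; exact: far.
  - exact: apart.
have xP : x \in P by rewrite -(maxsetsup maxP packU (subsetUr _ _)) setU11.
by exists x.
Qed.

Theorem mainTheorem1 (R : realType) (n k m : nat) (W : 'I_m -> k.-tuple 'I_n)
  (C : {set 'rV['F_2]_n}) (eta0 eta zeta : R) (ytil : 'rV['F_2]_m)
  (L' : {set 'rV['F_2]_n}) :
  (0 < n)%N -> (0 < k)%N -> (0 < m)%N ->
  linear_code C -> balanced eta0 C -> balanced eta (dsum_code W C) ->
  0 < eta -> eta < 1 -> zeta < 2^-1 ->
  is_cover zeta (Llist W C ytil eta) L' ->
  (forall z', z' \in L' -> @rdist R m (dsum W z') ytil <= 2^-1 - Num.sqrt eta) ->
  @parity_sampler R n k m W (1 - 2 * zeta) eta ->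
  exists L'' : {set 'rV['F_2]_n},
    [/\ L'' \subset L', #|L''|%:R <= eta^-1 & is_cover (2 * zeta) (Llist W C ytil eta) L''].
Proof.
move=> n0 _ m0 _ _ _ eta_gt0 _ _ cover near_ytil sampler.
have eta_ge0 := ltW eta_gt0.
have [zeta_le0 | zeta_gt0] := lerP zeta 0.
  (* biases are at most 1, so a zeta-cover with zeta <= 0 covers nothing *)
  exists set0; split; [exact: sub0set | by rewrite cards0 invr_ge0 |].
  move=> z /cover [z' _].
  by have := bias_le1 R (z - z') n0; lra.
pose close := [rel x y : 'rV['F_2]_n | 1 - 2 * zeta < @bias R n (x - y)].
have close_refl : reflexive close by move=> x; rewrite /= subrr bias0 //; lra.
have close_sym : symmetric close by move=> x y; rewrite /= bias_subC.
have [L'' [subL' apart covers]] := maximal_packing L' close_refl close_sym.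
exists L''; split => //.
- have size_bound : #|L''|%:R * Num.sqrt eta ^+ 2 <= 1.
    apply: (johnson_bound (Y := dsum W) (yt := ytil)); rewrite ?sqrtr_ge0 //.
    + by move=> z /(subsetP subL') /near_ytil; exact: corr_ge_of_rdist.
    + move=> z z' zL z'L neq; rewrite -dsumB sqr_sqrtr //.
      apply: corr_le_of_bias m0 _; apply: sampler; rewrite leNgt; exact: apart.
  by rewrite sqr_sqrtr // in size_bound; rewrite -div1r ler_pdivlMr.
- move=> z /cover [z' z'L' hz]; have [w wL'' hw] := covers z' z'L'.
  by exists w => //; have := bias_triangle n0 hz hw; lra.
Qed.
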